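(* Let $q$ be a power of an odd prime, $q^n-1=ls$ with $l,s$ positive integers, $\gamma$ a primitive element of $\mathbb{F}_{q^n}$, $\xi=\gamma^s$, and $C_i=\gamma^i\{\gamma^{lj}:0\le j\le s-1\}$ for $0\le i\le l-1$. Let $r$ be a positive integer, $f\in\mathbb{F}_{q^n}[x]$, $A_i=f(\xi^{iq^r})$, and $S(x)=x^{q^r}f(x^{sq^r})$, so that $S(x)=A_ix^{q^r}$ for $x\in C_i$. Suppose $S$ is a scattered polynomial of index $t\in\{0,\dots,n-1\}$ over $\mathbb{F}_{q^n}$. If $y\in C_i$ and $z\in C_j$ ($0\le i,j\le l-1$) satisfy $S(y)/y^{q^t}=S(z)/z^{q^t}$, then $A_i=A_j$.
   Context: A polynomial (function) $S$ on $\mathbb{F}_{q^n}$ is a scattered polynomial of index $t$ over $\mathbb{F}_{q^n}$ if for all $y,z\in\mathbb{F}_{q^n}^*$, $\frac{S(y)}{y^{q^t}}=\frac{S(z)}{z^{q^t}}$ implies $y/z\in\mathbb{F}_q$. *)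

From HB Require Import structures.
From mathcomp Require Import all_boot all_order all_algebra all_field.
Set Implicit Arguments. Unset Strict Implicit. Unset Printing Implicit Defensive.
Import GRing.Theory.
Local Open Scope ring_scope.

Definition odd_prime_power (q : nat) : Prop :=
  exists p k : nat, [/\ prime p, odd p, (0 < k)%N & q = (p ^ k)%N].

Definition in_Fq (F : finFieldType) (q : nat) (x : F) : Prop := x ^+ q = x.

Definition scattered (F : finFieldType) (q t : nat) (S : F -> F) : Prop :=
  forall y z : F, y != 0 -> z != 0 ->
    S y / y ^+ (q ^ t) = S z / z ^+ (q ^ t) -> in_Fq q (y / z).

Definition cosetC (F : finFieldType) (gamma : F) (l s i : nat) : {set F} :=
  [set gamma ^+ i * gamma ^+ (l * j) | j : 'I_s].

(* On each coset C_i the map x |-> x^(s q^r) is constant, equal to xi^(i q^r), so S acts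
   as the monomial A_i x^(q^r) there.  If S(y)/y^(q^t) = S(z)/z^(q^t) with y in C_i and
   z in C_j, scatteredness gives y = w z with w in F_q^*; since w is fixed by every power
   of Frobenius, the factor w cancels and the equation reduces to A_i = A_j. *)

From HB Require Import structures.
From mathcomp Require Import all_boot all_order all_algebra all_field.
Set Implicit Arguments. Unset Strict Implicit. Unset Printing Implicit Defensive.
Import GRing.Theory.
Local Open Scope ring_scope.

Lemma in_Fq_expr_expn (F : finFieldType) (q k : nat) (w : F) :
  in_Fq q w -> w ^+ (q ^ k) = w.
Proof.
rewrite /in_Fq => Hw; elim: k => [|k IHk]; first by rewrite expn0 expr1.
by rewrite expnS exprM Hw IHk.
Qed.

Lemma in_Fq_exprMn_expn (F : finFieldType) (q k : nat) (w z : F) :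
  in_Fq q w -> (w * z) ^+ (q ^ k) = w * z ^+ (q ^ k).
Proof. by move=> Hw; rewrite exprMn (in_Fq_expr_expn k Hw). Qed.

Section Cosets.

Variables (F : finFieldType) (gamma : F) (l s : nat).
Hypothesis gamma_ls : gamma ^+ (l * s) = 1.

Lemma cosetC_exprM (i m : nat) (y : F) :
  y \in cosetC gamma l s i -> y ^+ (s * m) = (gamma ^+ s) ^+ (i * m).
Proof.
case/imsetP=> k _ ->.
by rewrite exprMn -!exprM mulnACA (exprM _ (l * s)) gamma_ls expr1n mulr1 mulnCA.
Qed.

Lemma cosetC_neq0 (i : nat) (y : F) :
  (0 < l * s)%N -> y \in cosetC gamma l s i -> y != 0.
Proof.
move=> ls_gt0 /imsetP[k _ ->].
have gamma_neq0 : gamma != 0.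
  by apply: contra_eq_neq gamma_ls => ->; rewrite expr0n gtn_eqF // eq_sym oner_eq0.
by rewrite mulf_neq0 // expf_neq0.
Qed.

End Cosets.

Lemma monomial_ratio_inj (F : finFieldType) (q r t : nat) (w z a b : F) :
  in_Fq q w -> w != 0 -> z != 0 ->
  (w * z) ^+ (q ^ r) * a / (w * z) ^+ (q ^ t) = z ^+ (q ^ r) * b / z ^+ (q ^ t) ->
  a = b.
Proof.
move=> Hw w_neq0 z_neq0; rewrite !(in_Fq_exprMn_expn _ _ Hw).
rewrite -(mulrA w) invfM mulrACA mulfV // mul1r => /mulIf.
by rewrite invr_eq0 expf_neq0 // => /(_ isT) /mulfI; apply; rewrite expf_neq0.
Qed.

Theorem mainTheorem3 (F : finFieldType) (q n l s r t : nat) (gamma : F)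
    (f : {poly F}) (i j : nat) (y z : F) :
  odd_prime_power q -> (0 < n)%N -> #|F| = (q ^ n)%N ->
  (q ^ n - 1)%N = (l * s)%N -> (0 < l)%N -> (0 < s)%N ->
  (q ^ n - 1)%N.-primitive_root gamma ->
  (0 < r)%N -> (t < n)%N ->
  let xi := gamma ^+ s in
  let A := fun k : nat => f.[xi ^+ (k * q ^ r)] in
  let S := fun x : F => x ^+ (q ^ r) * f.[x ^+ (s * q ^ r)] in
  scattered q t S ->
  (i < l)%N -> (j < l)%N ->
  y \in cosetC gamma l s i -> z \in cosetC gamma l s j ->
  S y / y ^+ (q ^ t) = S z / z ^+ (q ^ t) ->
  A i = A j.
Proof.
move=> _ _ _ qn_ls l_gt0 s_gt0 gamma_prim _ _ xi A S S_scattered _ _ yC zC Syz.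
have gamma_ls : gamma ^+ (l * s) = 1 by rewrite -qn_ls prim_expr_order.
have ls_gt0 : (0 < l * s)%N by rewrite muln_gt0 l_gt0 s_gt0.
have y_neq0 := cosetC_neq0 gamma_ls ls_gt0 yC.
have z_neq0 := cosetC_neq0 gamma_ls ls_gt0 zC.
have yz_Fq := S_scattered y z y_neq0 z_neq0 Syz.
have Sy : S y = y ^+ (q ^ r) * A i by rewrite /S (cosetC_exprM gamma_ls _ yC).
have Sz : S z = z ^+ (q ^ r) * A j by rewrite /S (cosetC_exprM gamma_ls _ zC).
move: Syz; rewrite Sy Sz -{1 2}(divfK z_neq0 y).
by apply: monomial_ratio_inj; rewrite // mulf_neq0 // invr_eq0.
Qed.
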